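(* Let $N\ge 4$ be an even integer and $\Lambda=\{1,\dots,N\}$ a ring of sites with periodic boundary conditions (indices taken mod $N$). To each site $i\in\Lambda$ attach two spin-$1/2$ degrees of freedom labelled $(i,\mathrm{L})$ and $(i,\mathrm{R})$, so the total Hilbert space is $(\mathbb{C}^{2})^{\otimes 2N}$. For each $i\in\Lambda$ let the bond $i^*$ denote the pair of spins $((i,\mathrm{R}),(i+1,\mathrm{L}))$, and define the two bond states $$|\boldsymbol{\downarrow}\rangle_{i^*}=\tfrac{1}{\sqrt2}\big(|\uparrow\downarrow\rangle-|\downarrow\uparrow\rangle\big)_{(i,\mathrm{R}),(i+1,\mathrm{L})},\qquad |\boldsymbol{\uparrow}\rangle_{i^*}=|\uparrow\uparrow\rangle_{(i,\mathrm{R}),(i+1,\mathrm{L})}.$$ Let $$Q^+_{\mathrm{frac}}=\sum_{j\in\Lambda}(-1)^j\,|\boldsymbol{\uparrow}\boldsymbol{\uparrow}\rangle\langle\boldsymbol{\downarrow}\boldsymbol{\downarrow}|_{j^*,(j+1)^*},\qquad |\mathcal{S}^{\mathrm{frac}}_n\rangle=(Q^+_{\mathrm{frac}})^n\bigotimes_{j\in\Lambda}|\boldsymbol{\downarrow}\rangle_{j^*}\quad(n\ge 0).$$ Then for every $n\ge0$ and every $i\in\Lambda$ there exist (unnormalized, possibly zero) vectors $|\Xi^0_{\sigma\sigma'}\rangle$ ($\sigma,\sigma'\in\{\uparrow,\downarrow\}$), $|\Xi^1\rangle$, $|\Xi^2\rangle$ in the Hilbert space of all spins belonging to bonds other than $(i-1)^*,i^*,(i+1)^*$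 such that $$|\mathcal{S}^{\mathrm{frac}}_n\rangle=\sum_{\sigma,\sigma'\in\{\uparrow,\downarrow\}}|\boldsymbol{\sigma}\boldsymbol{\downarrow}\boldsymbol{\sigma'}\rangle_{(i-1)^*,i^*,(i+1)^*}\otimes|\Xi^0_{\sigma\sigma'}\rangle+\big(|\boldsymbol{\uparrow}\boldsymbol{\uparrow}\boldsymbol{\downarrow}\rangle-|\boldsymbol{\downarrow}\boldsymbol{\uparrow}\boldsymbol{\uparrow}\rangle\big)_{(i-1)^*,i^*,(i+1)^*}\otimes|\Xi^1\rangle+|\boldsymbol{\uparrow}\boldsymbol{\uparrow}\boldsymbol{\uparrow}\rangle_{(i-1)^*,i^*,(i+1)^*}\otimes|\Xi^2\rangle,$$ where $|\boldsymbol{a}\boldsymbol{b}\boldsymbol{c}\rangle_{(i-1)^*,i^*,(i+1)^*}=|\boldsymbol{a}\rangle_{(i-1)^*}\otimes|\boldsymbol{b}\rangle_{i^*}\otimes|\boldsymbol{c}\rangle_{(i+1)^*}$.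
   Context: This is the ''fractionalized'' spin-1/2 description of the spin-1 AKLT chain: each spin-1 site is split into two spin-1/2's, and the scar tower is built from the valence-bond-solid state $\bigotimes_j|\boldsymbol{\downarrow}\rangle_{j^*}$ by the operator $Q^+_{\mathrm{frac}}$, which turns two adjacent singlet bonds into two fully polarized bonds with a staggered sign. Bold letters denote bond states as defined in the claim. *)

From HB Require Import structures.
From mathcomp Require Import all_boot all_order all_algebra.
Set Implicit Arguments. Unset Strict Implicit. Unset Printing Implicit Defensive.
Import Order.TTheory GRing.Theory Num.Theory.
Local Open Scope ring_scope.

(* Sites of the ring: 'I_N, where ordinal k stands for site k (site N is 0;
   N even, so (-1)^N = (-1)^0).
   A spin is a pair (site, side) with side false = L, true = R.
   A spin configuration assigns true (= up) or false (= down) to each spin.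
   A vector of (C^2)^{⊗2N} is its coefficient function on configurations
   (computational basis). *)

Definition spin N := ('I_N * bool)%type.
Definition config N := {ffun spin N -> bool}.
Definition state (C : numClosedFieldType) N := {ffun config N -> C}.

Definition bondR N (j : 'I_N) : spin N := (j, true).
Definition bondL N (j : 'I_N) : spin N := (ordS j, false).
Definition in_bond N (j : 'I_N) (x : spin N) : bool :=
  (x == bondR j) || (x == bondL j).

Definition bdown (C : numClosedFieldType) N (j : 'I_N) (s : config N) : C :=
  if s (bondR j) && ~~ s (bondL j) then 1 / sqrtC 2
  else if ~~ s (bondR j) && s (bondL j) then - (1 / sqrtC 2) else 0.

Definition bup (C : numClosedFieldType) N (j : 'I_N) (s : config N) : C :=
  if s (bondR j) && s (bondL j) then 1 else 0.

Definition bstate (C : numClosedFieldType) N (b : bool) (j : 'I_N) (s : config N) : C :=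
  if b then bup C j s else bdown C j s.

(* the operator |up up><down down|_{j*,(j+1)*} (tensor identity elsewhere),
   applied to a vector psi *)
Definition Qloc (C : numClosedFieldType) N (j : 'I_N) (psi : state C N) : state C N :=
  [ffun s : config N => \sum_(t : config N)
     (if [forall x, ~~ (in_bond j x || in_bond (ordS j) x) ==> (s x == t x)]
      then 1 else 0)
     * (bup C j s * bup C (ordS j) s)
     * ((bdown C j t)^* * (bdown C (ordS j) t)^*) * psi t].

Definition Qfrac (C : numClosedFieldType) N (psi : state C N) : state C N :=
  [ffun s : config N => \sum_(j : 'I_N) (-1) ^+ (nat_of_ord j) * Qloc j psi s].

Definition vbs (C : numClosedFieldType) N : state C N :=
  [ffun s : config N => \prod_(j : 'I_N) bdown C j s].

Definition Sfrac (C : numClosedFieldType) N (n : nat) : state C N :=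
  iter n (@Qfrac C N) (vbs C N).

Definition outside3 N (i : 'I_N) (x : spin N) : bool :=
  ~~ [|| in_bond (ord_pred i) x, in_bond i x | in_bond (ordS i) x].

(* a vector of the Hilbert space of the spins in P, viewed (tensored with
   nothing) as a function on full configurations depending only on spins in P *)
Definition depends_only (C : numClosedFieldType) N (P : pred (spin N))
  (f : state C N) : Prop :=
  forall s t : config N, (forall x, P x -> s x = t x) -> f s = f t.

From HB Require Import structures.
From mathcomp Require Import all_boot all_order all_algebra.
From mathcomp Require Import ring zify.
Set Implicit Arguments. Unset Strict Implicit. Unset Printing Implicit Defensive.
Import Order.TTheory GRing.Theory Num.Theory.
Local Open Scope ring_scope.

(* Call a state bold on a bond if, on the two spins of that bond, it lies in
   the span of |uu> and the singlet.  The claimed decomposition says exactly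
   that the state is bold on (i-1)*, i*, (i+1)* and that, in bold coordinates
   on these three bonds, its down-up-down component vanishes while its
   up-up-down and down-up-up components are opposite.  The valence-bond solid
   has these properties because its bond i* is a singlet.  Every term of
   Q^+_frac leaves |uu> on the two bonds it touches, so boldness is preserved.
   Terms far from the triple commute with reading off the triple components;
   the terms j = i-2 and j = i+1 only feed the relevant components from the
   vanishing down-up-down one; and the terms j = i-1 and j = i create
   up-up-down and down-up-up from the same down-down-down component with the
   opposite signs (-1)^(i-1) = -(-1)^i, N being even. *)

Section CyclicNeighbours.
Variable N : nat.

Lemma ordS_neq (j : 'I_N) : (1 < N)%N -> ordS j != j.
Proof.
move=> N_gt1; apply/eqP => /(congr1 val) /=; have := ltn_ord j.
rewrite leq_eqVlt => /orP[/eqP jN|lt]; first by rewrite jN modnn; lia.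
by rewrite modn_small //; lia.
Qed.

Lemma ordSS_neq (j : 'I_N) : (2 < N)%N -> ordS (ordS j) != j.
Proof.
move=> N_gt2; apply/eqP => /(congr1 val) /=; rewrite -addn1 modnDml.
have := ltn_ord j; case: (ltnP j.+2 N) => [lt _|ge lt].
  by rewrite modn_small; lia.
have -> : (j.+1 + 1 = (j.+2 - N) + N)%N by lia.
by rewrite modnDr modn_small; lia.
Qed.

Lemma sign_ordS (R : pzRingType) (j : 'I_N) :
  ~~ odd N -> (-1) ^+ ordS j = - (-1) ^+ j :> R.
Proof.
by move=> evenN; rewrite /= -signr_odd odd_mod ?(negbTE evenN) // signr_odd exprS mulN1r.
Qed.

End CyclicNeighbours.

Section Configurations.
Variable N : nat.
Implicit Types (s t : config N) (j k : 'I_N) (x y : spin N) (P : pred (spin N)).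

Definition set_spin s x b : config N := [ffun y => if y == x then b else s y].

(* Locked: letting unification unfold the nested finfun updates makes
   rewriting with set_bond lemmas extremely slow. *)
Fact set_bond_key : unit. Proof. by []. Qed.
Definition set_bond : config N -> 'I_N -> bool -> bool -> config N :=
  locked_with set_bond_key
    (fun s k a b => set_spin (set_spin s (bondR k) a) (bondL k) b).

Lemma set_bond_spins s k a b :
  set_bond s k a b = set_spin (set_spin s (bondR k) a) (bondL k) b.
Proof. by rewrite [set_bond]unlock. Qed.

Lemma eq_bondRL j k : (bondR j == bondL k) = false.
Proof. by rewrite xpair_eqE andbF. Qed.

Lemma eq_bondLR j k : (bondL j == bondR k) = false.
Proof. by rewrite xpair_eqE andbF. Qed.

Lemma eq_bondR j k : (bondR j == bondR k) = (j == k).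
Proof. by rewrite xpair_eqE andbT. Qed.

Lemma eq_bondL j k : (bondL j == bondL k) = (j == k).
Proof. by rewrite xpair_eqE andbT (inj_eq (@ordS_inj N)). Qed.

Lemma set_bondE s k a b y :
  set_bond s k a b y = if y == bondL k then b else if y == bondR k then a else s y.
Proof. by rewrite set_bond_spins !ffunE. Qed.

Lemma set_bondR s k a b j :
  set_bond s k a b (bondR j) = if j == k then a else s (bondR j).
Proof. by rewrite set_bondE eq_bondRL eq_bondR. Qed.

Lemma set_bondL s k a b j :
  set_bond s k a b (bondL j) = if j == k then b else s (bondL j).
Proof. by rewrite set_bondE eq_bondL eq_bondLR; case: (j == k). Qed.

Lemma set_bondC s j k a b c d : j != k ->
  set_bond (set_bond s j a b) k c d = set_bond (set_bond s k c d) j a b.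
Proof.
rewrite eq_sym => kj; apply/ffunP => y; rewrite !set_bondE.
case: (y =P bondL k) => [->|_]; first by rewrite eq_bondL (negbTE kj) eq_bondLR.
by case: (y =P bondR k) => [->|_] //; rewrite eq_bondRL eq_bondR (negbTE kj).
Qed.

Lemma set_bond_overwrite s k a b c d :
  set_bond (set_bond s k a b) k c d = set_bond s k c d.
Proof.
by apply/ffunP => y; rewrite !set_bondE; case: (y == bondL k); case: (y == bondR k).
Qed.

Lemma set_bond_id s k : set_bond s k (s (bondR k)) (s (bondL k)) = s.
Proof.
apply/ffunP => y; rewrite set_bondE.
by case: (y =P bondL k) => [->|_] //; case: (y =P bondR k) => [->|].
Qed.

Lemma set_bond_outer k j j' : k != j -> k != j' -> forall s a b c d e f,
  set_bond (set_bond (set_bond s k a b) j c d) j' e f =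
  set_bond (set_bond (set_bond s j c d) j' e f) k a b.
Proof. by move=> kj kj' s *; rewrite (set_bondC _ _ _ _ _ kj) (set_bondC _ _ _ _ _ kj'). Qed.

Definition agree_off P s t : bool := [forall x, ~~ P x ==> (s x == t x)].

Lemma agree_off_set_spin P x s t b : P x ->
  agree_off [pred y | P y && (y != x)] (set_spin s x b) t = (t x == b) && agree_off P s t.
Proof.
move=> Px; apply/idP/andP.
- move/forallP=> agr; split; first by move: (agr x); rewrite /= eqxx andbF ffunE eqxx eq_sym.
  apply/forallP => y; apply/implyP => Py.
  have yx : y != x by apply: contraNneq Py => ->.
  by move: (agr y); rewrite /= (negbTE Py) ffunE (negbTE yx).
- case=> /eqP tx /forallP agr; apply/forallP => y; rewrite /= ffunE.
  by case: (y =P x) => [->|_]; [rewrite tx eqxx implybT | rewrite andbT; exact: agr].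
Qed.

Lemma sum_agree_off_spin (R : nmodType) P x s (F : config N -> R) : P x ->
  \sum_t (if agree_off P s t then F t else 0) =
  \sum_(b : bool) \sum_t
     (if agree_off [pred y | P y && (y != x)] (set_spin s x b) t then F t else 0).
Proof.
move=> Px; rewrite exchange_big /=; apply: eq_bigr => t _.
rewrite big_bool /= !agree_off_set_spin //.
by case: (t x); case: agree_off; rewrite /= ?addr0 ?add0r.
Qed.

Lemma sum_agree_off_none (R : nmodType) P s (F : config N -> R) : P =1 pred0 ->
  \sum_t (if agree_off P s t then F t else 0) = F s.
Proof.
move=> P0; have agree_ss : agree_off P s s by apply/forallP => x; rewrite eqxx implybT.
rewrite (bigD1 s) //= agree_ss big1 ?addr0 // => t ts.
case: ifP => // /forallP agr; case/eqP: ts.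
by apply/ffunP => y; apply/eqP; rewrite eq_sym; apply: (implyP (agr y)); rewrite P0.
Qed.

Lemma eq_agree_off P Q : P =1 Q -> agree_off P =2 agree_off Q.
Proof. by move=> PQ s t; apply: eq_forallb => x; rewrite PQ. Qed.

Lemma sum_agree_off_bond (R : nmodType) P k s (F : config N -> R) :
  P (bondR k) -> P (bondL k) ->
  \sum_t (if agree_off P s t then F t else 0) =
  \sum_(a : bool) \sum_(b : bool) \sum_t
     (if agree_off [pred y | P y && ~~ in_bond k y] (set_bond s k a b) t then F t else 0).
Proof.
move=> PR PL; rewrite (sum_agree_off_spin _ _ PR); apply: eq_bigr => a _.
under [RHS]eq_bigr => b _ do under eq_bigr => t _ do rewrite set_bond_spins.
rewrite (@sum_agree_off_spin _ _ (bondL k)) /=; last by rewrite PL eq_bondLR.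
apply: eq_bigr => b _; apply: eq_bigr => t _; congr (if _ then _ else _).
by apply: eq_agree_off => y /=; rewrite /in_bond negb_or andbA.
Qed.

End Configurations.

Section BondStates.
Variables (C : numClosedFieldType) (N : nat).
Implicit Types (s t : config N) (j k : 'I_N) (psi : state C N).

Definition up_amp (a b : bool) : C := if a && b then 1 else 0.

Definition singlet_amp (a b : bool) : C :=
  if a && ~~ b then 1 / sqrtC 2 else if ~~ a && b then - (1 / sqrtC 2) else 0.

Lemma bupE k s : bup C k s = up_amp (s (bondR k)) (s (bondL k)).
Proof. by []. Qed.

Lemma bdownE k s : bdown C k s = singlet_amp (s (bondR k)) (s (bondL k)).
Proof. by []. Qed.

Lemma bup_set_bond j s k a b :
  bup C j (set_bond s k a b) = if j == k then up_amp a b else bup C j s.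
Proof. by rewrite !bupE set_bondR set_bondL; case: eqP. Qed.

Lemma bdown_set_bond j s k a b :
  bdown C j (set_bond s k a b) = if j == k then singlet_amp a b else bdown C j s.
Proof. by rewrite !bdownE set_bondR set_bondL; case: eqP. Qed.

Lemma QlocE j psi s : (1 < N)%N ->
  Qloc j psi s = bup C j s * bup C (ordS j) s * (1 / sqrtC 2)^* ^+ 2 *
    (psi (set_bond (set_bond s j true false) (ordS j) true false)
     - psi (set_bond (set_bond s j true false) (ordS j) false true)
     - psi (set_bond (set_bond s j false true) (ordS j) true false)
     + psi (set_bond (set_bond s j false true) (ordS j) false true)).
Proof.
move=> N_gt1; set P := fun x => in_bond j x || in_bond (ordS j) x.
have j1j : (ordS j == j) = false by apply/negbTE/ordS_neq.
have jj1 : (j == ordS j) = false by rewrite eq_sym.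
have PR : P (bondR j) by rewrite /P /in_bond eqxx.
have PL : P (bondL j) by rewrite /P /in_bond eqxx orbT.
set P' := [pred y | P y && ~~ in_bond j y].
have P'R : P' (bondR (ordS j)) by rewrite /= /P /in_bond eqxx orbT eq_bondR eq_bondRL j1j.
have P'L : P' (bondL (ordS j)) by rewrite /= /P /in_bond eqxx !orbT eq_bondL eq_bondLR j1j.
have P'0 : [pred y | P' y && ~~ in_bond (ordS j) y] =1 pred0.
  by move=> y /=; rewrite /P; case: (in_bond j y); case: (in_bond (ordS j) y).
rewrite /Qloc ffunE; transitivity (\sum_t (if agree_off P s t then
  bup C j s * bup C (ordS j) s * ((bdown C j t)^* * (bdown C (ordS j) t)^*) * psi t else 0)).
  by apply: eq_bigr => t _; rewrite /agree_off; case: ifP; rewrite ?mul1r ?mul0r.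
rewrite (sum_agree_off_bond _ _ PR PL).
under eq_bigr => a _ do under eq_bigr => b _ do rewrite (sum_agree_off_bond _ _ P'R P'L).
under eq_bigr => a _ do under eq_bigr => b _ do under eq_bigr => c _ do
  under eq_bigr => d _ do rewrite (sum_agree_off_none _ _ P'0).
rewrite !big_bool /= !bdown_set_bond !eqxx jj1 /singlet_amp /=.
by rewrite rmorph0 rmorphN; ring.
Qed.

Lemma Qloc_eq0 j psi s : (1 < N)%N -> bup C j s * bup C (ordS j) s = 0 -> Qloc j psi s = 0.
Proof. by move=> N_gt1 b0; rewrite QlocE // b0 !mul0r. Qed.

Lemma Qloc0 j s : Qloc j (0 : state C N) s = 0.
Proof. by rewrite ffunE big1 // => t _; rewrite ffunE mulr0. Qed.

Lemma QlocN j psi s : Qloc j (- psi) s = - Qloc j psi s.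
Proof. by rewrite !ffunE -sumrN; apply: eq_bigr => t _; rewrite ffunE mulrN. Qed.

Lemma Qloc_set_bond_far j k psi s a b : (1 < N)%N -> k != j -> k != ordS j ->
  Qloc j psi (set_bond s k a b) = Qloc j [ffun t => psi (set_bond t k a b)] s.
Proof.
move=> N_gt1 kj kj1; rewrite !QlocE // !ffunE !bup_set_bond.
by rewrite ![j == k]eq_sym ![ordS j == k]eq_sym (negbTE kj) (negbTE kj1) !(set_bond_outer kj kj1).
Qed.

End BondStates.

Section BoldBonds.
Variables (C : numClosedFieldType) (N : nat).
Implicit Types (s : config N) (j k : 'I_N) (psi : state C N).

(* Equivalently: on bond k, psi lies in the span of |uu> and the singlet. *)
Definition bold_bond psi k :=
  (forall s, psi (set_bond s k false false) = 0) /\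
  (forall s, psi (set_bond s k false true) = - psi (set_bond s k true false)).

Lemma bold_bond_expand psi k s : bold_bond psi k ->
  psi s = bup C k s * psi (set_bond s k true true)
          + bdown C k s * (sqrtC 2 * psi (set_bond s k true false)).
Proof.
case=> dd0 anti; have s2 : sqrtC 2 != 0 :> C by rewrite sqrtC_eq0 pnatr_eq0.
rewrite -{1}(set_bond_id s k) bupE bdownE /up_amp /singlet_amp.
case: (s (bondR k)); case: (s (bondL k)) => /=.
- by rewrite mul1r mul0r addr0.
- by rewrite mul0r add0r mulrA div1r mulVf // mul1r.
- by rewrite anti mul0r add0r mulrA mulNr div1r mulVf // mulN1r.
- by rewrite dd0 !mul0r addr0.
Qed.

Lemma vbs_bold_bond k : bold_bond (vbs C N) k.
Proof.
have vbsE s a b : vbs C N (set_bond s k a b) =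
    singlet_amp C a b * \prod_(j | j != k) bdown C j s.
  rewrite ffunE (bigD1 k) //= bdown_set_bond eqxx; congr (_ * _).
  by apply: eq_bigr => j jk; rewrite bdown_set_bond (negbTE jk).
by split=> s; rewrite !vbsE /singlet_amp /= ?mul0r ?mulNr.
Qed.

Lemma Qloc_bold_bond j psi k : (1 < N)%N -> bold_bond psi k -> bold_bond (Qloc j psi) k.
Proof.
move=> N_gt1 [dd0 anti].
case: (eqVneq k j) => [->|kj].
  by split=> s; rewrite !QlocE // !bup_set_bond !eqxx /up_amp /= !mul0r ?oppr0.
case: (eqVneq k (ordS j)) => [->|kj1].
  by split=> s; rewrite !QlocE // !bup_set_bond !eqxx /up_amp /= !mulr0 !mul0r ?oppr0.
split=> s; rewrite !Qloc_set_bond_far //.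
  have -> : [ffun t => psi (set_bond t k false false)] = 0.
    by apply/ffunP => t; rewrite !ffunE dd0.
  by rewrite Qloc0.
have -> : [ffun t => psi (set_bond t k false true)] =
          - [ffun t => psi (set_bond t k true false)].
  by apply/ffunP => t; rewrite !ffunE anti.
by rewrite QlocN.
Qed.

Lemma Qfrac_bold_bond psi k : (1 < N)%N -> bold_bond psi k -> bold_bond (Qfrac psi) k.
Proof.
move=> N_gt1 bold; split=> s; rewrite !ffunE.
  by rewrite big1 // => j _; rewrite (proj1 (Qloc_bold_bond j N_gt1 bold)) mulr0.
rewrite -sumrN; apply: eq_bigr => j _.
by rewrite (proj2 (Qloc_bold_bond j N_gt1 bold)) mulrN.
Qed.

End BoldBonds.

Section BondTriple.
Variables (C : numClosedFieldType) (N : nat) (i : 'I_N).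
Hypothesis N_gt2 : (2 < N)%N.
Implicit Types (s t : config N) (j k : 'I_N) (psi : state C N) (p q r : bool * bool).

Local Notation im := (ord_pred i).
Local Notation ip := (ordS i).
Local Notation uu := (true, true).
Local Notation ud := (true, false).
Local Notation du := (false, true).

Let N_gt1 : (1 < N)%N. Proof. exact: ltnW. Qed.
Let ip_i : ip != i. Proof. exact: ordS_neq. Qed.
Let i_ip : i != ip. Proof. by rewrite eq_sym ip_i. Qed.
Let i_im : i != im. Proof. by have := ordS_neq im N_gt1; rewrite ord_predK. Qed.
Let im_i : im != i. Proof. by rewrite eq_sym i_im. Qed.
Let ip_im : ip != im. Proof. by have := ordSS_neq im N_gt2; rewrite ord_predK. Qed.
Let im_ip : im != ip. Proof. by rewrite eq_sym ip_im. Qed.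

Let ordS_eq_i j : (ordS j == i) = (j == im).
Proof. by rewrite -{1}(ord_predK i) (inj_eq (@ordS_inj N)). Qed.
Let ordS_eq_ip j : (ordS j == ip) = (j == i).
Proof. exact: (inj_eq (@ordS_inj N)). Qed.

Definition set_triple s p q r : config N :=
  set_bond (set_bond (set_bond s im p.1 p.2) i q.1 q.2) ip r.1 r.2.

Lemma set_tripleE s a b c d e f :
  set_bond (set_bond (set_bond s im a b) i c d) ip e f = set_triple s (a, b) (c, d) (e, f).
Proof. by []. Qed.

Lemma set_triple_im s p q r a b :
  set_bond (set_triple s p q r) im a b = set_triple s (a, b) q r.
Proof. by rewrite /set_triple !(set_bond_outer im_i im_ip) set_bond_overwrite. Qed.

Lemma set_triple_i s p q r a b :
  set_bond (set_triple s p q r) i a b = set_triple s p (a, b) r.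
Proof. by rewrite /set_triple !(set_bondC _ _ _ _ _ i_ip) set_bond_overwrite. Qed.

Lemma set_triple_ip s p q r a b :
  set_bond (set_triple s p q r) ip a b = set_triple s p q (a, b).
Proof. by rewrite /set_triple set_bond_overwrite. Qed.

Lemma set_bond_triple j : j \notin [:: im; i; ip] -> forall s p q r a b,
  set_bond (set_triple s p q r) j a b = set_triple (set_bond s j a b) p q r.
Proof.
rewrite !inE => /norP[jm /norP[ji jp]] s p q r a b.
rewrite /set_triple -(set_bondC _ _ _ _ _ (jp : j != ip)).
by rewrite -(set_bondC _ _ _ _ _ (ji : j != i)) -(set_bondC _ _ _ _ _ (jm : j != im)).
Qed.

Lemma bup_set_triple j s p q r : bup C j (set_triple s p q r) =
  if j == ip then up_amp C r.1 r.2 else if j == i then up_amp C q.1 q.2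
  else if j == im then up_amp C p.1 p.2 else bup C j s.
Proof. by rewrite !bup_set_bond. Qed.

Lemma bup_triple_im s p q r : bup C im (set_triple s p q r) = up_amp C p.1 p.2.
Proof. by rewrite bup_set_triple (negbTE im_ip) (negbTE im_i) eqxx. Qed.

Lemma bup_triple_i s p q r : bup C i (set_triple s p q r) = up_amp C q.1 q.2.
Proof. by rewrite bup_set_triple (negbTE i_ip) eqxx. Qed.

Lemma bup_triple_ip s p q r : bup C ip (set_triple s p q r) = up_amp C r.1 r.2.
Proof. by rewrite bup_set_triple eqxx. Qed.

Lemma eq_set_triple s t : (forall x, outside3 i x -> s x = t x) ->
  forall p q r, set_triple s p q r = set_triple t p q r.
Proof.
move=> st p q r; apply/ffunP => y; rewrite /set_triple !set_bondE.
case: ifP => // yLp; case: ifP => // yRp; case: ifP => // yLi; case: ifP => // yRi.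
case: ifP => // yLm; case: ifP => // yRm.
by apply: st; rewrite /outside3 /in_bond yLp yRp yLi yRi yLm yRm.
Qed.

Lemma Qloc_set_triple_far j psi s p q r :
  j \notin [:: im; i; ip] -> ordS j \notin [:: im; i; ip] ->
  Qloc j psi (set_triple s p q r) = Qloc j [ffun t => psi (set_triple t p q r)] s.
Proof.
move=> jT j1T; rewrite !QlocE // !ffunE !bup_set_triple.
rewrite !(set_bond_triple jT) !(set_bond_triple j1T).
move: jT j1T; rewrite !inE => /norP[/negbTE-> /norP[/negbTE-> /negbTE->]].
by case/norP=> /negbTE-> /norP[/negbTE-> /negbTE->].
Qed.

(* With ud standing for the singlet on a bold bond: no bold down-up-down
   component, and opposite bold up-up-down and down-up-up components. *)
Definition scar_inv psi :=
  [/\ bold_bond psi im, bold_bond psi i, bold_bond psi ip,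
      forall s, psi (set_triple s ud uu ud) = 0 &
      forall s, psi (set_triple s ud uu uu) = - psi (set_triple s uu uu ud)].

Lemma bold_triple_im psi : bold_bond psi im -> forall s q r,
  psi (set_triple s du q r) = - psi (set_triple s ud q r).
Proof. by case=> _ anti s q r; rewrite -(set_triple_im s ud) anti set_triple_im. Qed.

Lemma bold_triple_i psi : bold_bond psi i -> forall s p r,
  psi (set_triple s p du r) = - psi (set_triple s p ud r).
Proof. by case=> _ anti s p r; rewrite -(set_triple_i s p ud) anti set_triple_i. Qed.

Lemma bold_triple_ip psi : bold_bond psi ip -> forall s p q,
  psi (set_triple s p q du) = - psi (set_triple s p q ud).
Proof. by case=> _ anti s p q; rewrite -(set_triple_ip s p q ud) anti set_triple_ip. Qed.

Lemma Qloc_no_down_up_down j psi s : scar_inv psi ->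
  Qloc j psi (set_triple s ud uu ud) = 0.
Proof.
case=> _ _ _ dud _.
have bup0 k : k \in [:: im; ip] -> bup C k (set_triple s ud uu ud) = 0.
  by rewrite !inE => /orP[]/eqP->; rewrite ?bup_triple_im ?bup_triple_ip.
case jT: (j \in [:: im; ip]).
  by apply: Qloc_eq0; rewrite // bup0 ?mul0r.
case j1T: (ordS j \in [:: im; ip]).
  by apply: Qloc_eq0; rewrite // (bup0 (ordS j)) ?mulr0.
move: jT j1T; rewrite !inE => /norP[jm jp] /norP[j1m j1p].
have jT : j \notin [:: im; i; ip].
  by rewrite !inE (negbTE jm) (negbTE jp) -ordS_eq_ip (negbTE j1p).
have j1T : ordS j \notin [:: im; i; ip].
  by rewrite !inE (negbTE j1m) ordS_eq_i (negbTE jm) (negbTE j1p).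
rewrite Qloc_set_triple_far //.
have -> : [ffun t => psi (set_triple t ud uu ud)] = 0 by apply/ffunP => t; rewrite !ffunE dud.
by rewrite Qloc0.
Qed.

Lemma Qloc_far_antisym j psi s : scar_inv psi -> j != im -> j != i ->
  Qloc j psi (set_triple s ud uu uu) = - Qloc j psi (set_triple s uu uu ud).
Proof.
case=> bm _ bp dud anti jm ji.
case: (eqVneq j ip) => [->|jp].
  rewrite [in RHS]Qloc_eq0 ?oppr0 ?bup_triple_ip ?mul0r //.
  case: (eqVneq (ordS ip) im) => [pm|pm].
    by apply: Qloc_eq0; rewrite // pm bup_triple_im /up_amp /= mulr0.
  have pT : ordS ip \notin [:: im; i; ip].
    by rewrite !inE (negbTE pm) (negbTE (ordSS_neq i N_gt2)) (negbTE (ordS_neq ip N_gt1)).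
  rewrite QlocE // !set_triple_ip !(set_bond_triple pT) !(bold_triple_ip bp) !dud.
  by rewrite !(oppr0, subr0) mulr0.
have jT : j \notin [:: im; i; ip] by rewrite !inE (negbTE jm) (negbTE ji) (negbTE jp).
case: (eqVneq (ordS j) im) => [j1m|j1m].
  rewrite Qloc_eq0 //; last by rewrite j1m bup_triple_im /up_amp /= mulr0.
  rewrite QlocE // j1m !(set_bond_triple jT) !set_triple_im.
  rewrite !(bold_triple_im bm) !dud.
  by rewrite !(oppr0, subr0) mulr0 oppr0.
have j1T : ordS j \notin [:: im; i; ip].
  by rewrite !inE (negbTE j1m) ordS_eq_i ordS_eq_ip (negbTE jm) (negbTE ji).
rewrite !Qloc_set_triple_far // -QlocN; congr (Qloc _ _ _).
by apply/ffunP => t; rewrite !ffunE anti.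
Qed.

Lemma Qloc_im_i psi s : scar_inv psi ->
  Qloc im psi (set_triple s uu uu ud) = Qloc i psi (set_triple s ud uu uu).
Proof.
case=> bm bi bp _ _; rewrite !QlocE // ord_predK.
rewrite !set_triple_im !set_triple_i !set_triple_ip.
rewrite !(bold_triple_im bm) !(bold_triple_i bi) !(bold_triple_ip bp).
by rewrite !bup_triple_im !bup_triple_i !bup_triple_ip; ring.
Qed.

Lemma Qfrac_scar_inv psi : ~~ odd N -> scar_inv psi -> scar_inv (Qfrac psi).
Proof.
move=> evenN inv; have [bm bi bp _ _] := inv.
split; try exact: Qfrac_bold_bond.
  by move=> s; rewrite ffunE big1 // => j _; rewrite Qloc_no_down_up_down // mulr0.
have split_near (F : 'I_N -> C) :
    \sum_j F j = F im + F i + \sum_(j | (j != im) && (j != i)) F j.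
  by rewrite (bigD1 im) // (bigD1 i) 1?eq_sym //= addrA.
have sign_im : (-1) ^+ i = - (-1) ^+ im :> C by rewrite -{1}(ord_predK i) sign_ordS.
move=> s; rewrite !ffunE !split_near.
rewrite [Qloc im _ (set_triple s ud uu uu)]Qloc_eq0 //; last first.
  by rewrite bup_triple_im /up_amp /= mul0r.
rewrite [Qloc i _ (set_triple s uu uu ud)]Qloc_eq0 //; last first.
  by rewrite bup_triple_ip /up_amp /= mulr0.
rewrite Qloc_im_i //; under eq_bigr => j /andP[jm ji] do rewrite Qloc_far_antisym // mulrN.
by rewrite sumrN sign_im; ring.
Qed.

Lemma vbs_scar_inv : scar_inv (vbs C N).
Proof.
have vbs_up s p r : vbs C N (set_triple s p uu r) = 0.
  by rewrite ffunE (bigD1 i) //= !bdown_set_bond !eqxx (negbTE i_ip) /singlet_amp /= mul0r.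
by split; try exact: vbs_bold_bond; move=> s; rewrite !vbs_up ?oppr0.
Qed.

Lemma scar_inv_decomposition psi : scar_inv psi ->
  exists (Xi0 : bool -> bool -> state C N) (Xi1 Xi2 : state C N),
    (forall a b, depends_only (outside3 i) (Xi0 a b)) /\
    depends_only (outside3 i) Xi1 /\
    depends_only (outside3 i) Xi2 /\
    forall s : config N,
      psi s =
        \sum_(a : bool) \sum_(b : bool)
           bstate C a im s * bdown C i s * bstate C b ip s * Xi0 a b s
      + (bup C im s * bup C i s * bdown C ip s
         - bdown C im s * bup C i s * bup C ip s) * Xi1 s
      + bup C im s * bup C i s * bup C ip s * Xi2 s.
Proof.
case=> bm bi bp dud anti.
pose weight (a : bool) : C := if a then 1 else sqrtC 2.
exists (fun a b => [ffun t => weight a * sqrtC 2 * weight b *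
                              psi (set_triple t (true, a) ud (true, b))]).
exists [ffun t => sqrtC 2 * psi (set_triple t uu uu ud)].
exists [ffun t => psi (set_triple t uu uu uu)].
split; [|split; [|split]].
- by move=> a b t u tu; rewrite !ffunE (eq_set_triple tu).
- by move=> t u tu; rewrite !ffunE (eq_set_triple tu).
- by move=> t u tu; rewrite !ffunE (eq_set_triple tu).
move=> s; rewrite !big_bool /= !ffunE.
rewrite (bold_bond_expand s bm) (bold_bond_expand (set_bond s im true true) bi).
rewrite (bold_bond_expand (set_bond s im true false) bi).
do 4 rewrite (bold_bond_expand (set_bond (set_bond s im _ _) i _ _) bp).
rewrite !bup_set_bond !bdown_set_bond (negbTE i_im) (negbTE ip_im) (negbTE ip_i).
by rewrite !set_tripleE dud anti; ring.
Qed.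

End BondTriple.

Theorem lemma1 (C : numClosedFieldType) (N : nat) (hN : (4 <= N)%N)
  (heven : ~~ odd N) (n : nat) (i : 'I_N) :
  exists (Xi0 : bool -> bool -> state C N) (Xi1 Xi2 : state C N),
    (forall a b, depends_only (outside3 i) (Xi0 a b)) /\
    depends_only (outside3 i) Xi1 /\
    depends_only (outside3 i) Xi2 /\
    forall s : config N,
      Sfrac C N n s =
        \sum_(a : bool) \sum_(b : bool)
           bstate C a (ord_pred i) s * bdown C i s * bstate C b (ordS i) s
           * Xi0 a b s
      + (bup C (ord_pred i) s * bup C i s * bdown C (ordS i) s
         - bdown C (ord_pred i) s * bup C i s * bup C (ordS i) s) * Xi1 s
      + bup C (ord_pred i) s * bup C i s * bup C (ordS i) s * Xi2 s.
Proof.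
have N_gt2 : (2 < N)%N := ltnW hN.
apply: (scar_inv_decomposition N_gt2).
elim: n => [|n IH]; first exact: vbs_scar_inv.
exact: Qfrac_scar_inv.
Qed.
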